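(* Let $\mathcal F$ be a family of finite graphs and let $I_{\mathcal F}\colon T_{\mathrm{Graph}}\leadsto\mathrm{Forb}_{T_{\mathrm{Graph}}}(\mathcal F)$ be the axiom-adding interpretation, where $\mathrm{Forb}_{T_{\mathrm{Graph}}}(\mathcal F)$ is the theory of graphs containing no induced copy of any member of $\mathcal F$. If $\mathcal F$ contains a complete graph, then $$\chi(I_{\mathcal F})=\max\bigl(\{\ell\in\mathbb{N}_+:\mathcal F\text{ contains no complete $\ell$-partite graph}\}\cup\{0\}\bigr)+1=\min\{\ell\in\mathbb{N}_+:\mathcal F\text{ contains a complete $\ell$-partite graph}\};$$ otherwise $\chi(I_{\mathcal F})=\infty$.
   Context: A complete graph is $K_n$ for some $n\ge 0$ (all pairs of distinct vertices adjacent). A graph $G$ is complete $\ell$-partite if there exists a function $f\colon V(G)\to[\ell]$ (not necessarily surjective, so parts may be empty) such that distinct vertices $v,w$ are adjacent iff $f(v)\neq f(w)$. Membership of a graph in $\mathcal F$ is up to isomorphism. For $T=\mathrm{Forb}_{T_{\mathrm{Graph}}}(\mathcal F)$ and $I=I_{\mathcal F}$, $I(N)=N$ and $\chi(I)=\sup(\{\ell\in\mathbb{N}_+:\forall n\in\mathbb{N}\ \exists N\in\mathcal M_n[T],\ T_{n,\ell}\subseteq I(N)\}\cup\{0\})+1$, where $\mathcal M_n[T]$ is the set of $n$-vertex models of $T$ up to isomorphism, $T_{n,\ell}$ is the complete $\ell$-partite graph on $n$ vertices with parts of sizes $\lfloor n/\ell\rfloor$ or $\lceil n/\ell\rceil$,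 and $G\subseteq H$ means there is an injection $V(G)\to V(H)$ mapping edges to edges. *)

From mathcomp Require Import all_boot.
Unset Printing Implicit Defensive.

Record graph := Graph { gn : nat; gadj : rel 'I_gn }.

Definition is_graph (G : graph) : Prop :=
  (forall v, ~~ gadj G v v) /\ (forall v w, gadj G v w = gadj G w v).

(* a family of finite graphs is a predicate on graphs; membership up to
   isomorphism is handled below by only testing isomorphism-invariant
   properties or using embeddings. *)
Definition graph_family := graph -> Prop.

Definition is_complete (G : graph) : Prop :=
  is_graph G /\ forall v w : 'I_(gn G), v != w -> gadj G v w.

(* complete l-partite (parts may be empty) *)
Definition is_complete_multipartite (l : nat) (G : graph) : Prop :=
  is_graph G /\ exists f : 'I_(gn G) -> 'I_l,
    forall v w : 'I_(gn G), v != w -> gadj G v w = (f v != f w).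

Definition fam_contains (F : graph_family) (P : graph -> Prop) : Prop :=
  exists G, F G /\ P G.

Definition induced_copy (H G : graph) : Prop :=
  exists f : 'I_(gn H) -> 'I_(gn G), injective f /\
    forall v w, gadj H v w = gadj G (f v) (f w).

Definition subgraph (G H : graph) : Prop :=
  exists f : 'I_(gn G) -> 'I_(gn H), injective f /\
    forall v w, gadj G v w -> gadj H (f v) (f w).

Definition forb_model (F : graph_family) (N : graph) : Prop :=
  is_graph N /\ forall H, F H -> ~ induced_copy H N.

(* Turán graph T_{n,l}: vertex v in part (v mod l); parts have sizes
   floor(n/l) or ceil(n/l). *)
Definition turan (n l : nat) : graph :=
  @Graph n (fun v w : 'I_n => (v != w) && (v %% l != w %% l)).

Definition chi_set (F : graph_family) (l : nat) : Prop :=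
  0 < l /\ forall n, exists N, forb_model F N /\ gn N = n /\ subgraph (turan n l) N.

(* chi(I_F) = sup (chi_set F ∪ {0}) + 1 ; None encodes infinity *)
Definition is_chi (F : graph_family) (c : option nat) : Prop :=
  match c with
  | None => forall m, exists l, m < l /\ chi_set F l
  | Some k => 0 < k /\ (forall l, chi_set F l -> l < k) /\ (k.-1 = 0 \/ chi_set F k.-1)
  end.

From mathcomp Require Import all_boot.
From mathcomp Require Import zify.
From Stdlib Require Import Classical.

(* Let P l mean "F contains a complete l-partite graph"; P is monotone in l.
   - If F contains no complete graph, the complete graph K_n is F-free and
     contains every Turán graph T_{n,l}, so every l > 0 is in the set defining
     chi, and chi is infinite.
   - If F contains a complete graph K, then K is complete (|K|+1)-partite, so
     P holds somewhere; let m+1 be the least l > 0 with P l.  For l > 0: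
     * if not P l, the Turán graphs T_{n,l} are F-free, since every induced
       subgraph of a complete l-partite graph is complete l-partite;
     * if P l, witnessed by G, then no F-free graph on l*R vertices contains
       T_{l*R,l} for R a Ramsey number for (|K|, |G|): each part of the Turán
       graph has R vertices, hence holds a clique of size |K| or an independent
       set of size |G|, and independent sets in all parts give an induced G.
     So the set defining chi is exactly {l > 0 | not P l} = {1, ..., m}. *)

Definition homogeneous {T : finType} (r : rel T) (b : bool) (A : {set T}) : Prop :=
  forall x y, x \in A -> y \in A -> x != y -> r x y = b.

Section Ramsey.

Variables (T : finType) (r : rel T).
Hypothesis r_sym : forall x y, r x y = r y x.

Definition nbhd (B : {set T}) (x : T) (b : bool) : {set T} :=
  [set y in B :\ x | r x y == b].

Lemma card_nbhd B x : #|nbhd B x true| + #|nbhd B x false| = #|B :\ x|.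
Proof.
rewrite -(cardsID [set y | r x y] (B :\ x)).
have -> : nbhd B x true = (B :\ x) :&: [set y | r x y].
  by apply/setP => y; rewrite !inE eqb_id.
have -> // : nbhd B x false = (B :\ x) :\: [set y | r x y].
by apply/setP => y; rewrite !inE eqbF_neg andbC.
Qed.

Lemma nbhd_sub B x b : nbhd B x b \subset B.
Proof. by apply/subsetP => y; rewrite !inE => /andP[/andP[_ ->]]. Qed.

Lemma homogeneous_cone (B A : {set T}) x b : x \in B -> A \subset nbhd B x b ->
  homogeneous r b A ->
  [/\ x |: A \subset B, #|x |: A| = #|A|.+1 & homogeneous r b (x |: A)].
Proof.
move=> xB sA hA; have inA y : y \in A -> [/\ y != x, y \in B & r x y = b].
  by move=> /(subsetP sA); rewrite !inE => /andP[/andP[-> ->] /eqP].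
split.
- by rewrite subUset sub1set xB (subset_trans sA) ?nbhd_sub.
- by rewrite cardsU1; case: (boolP (x \in A)) => [/inA[]|]; rewrite ?eqxx.
- move=> u v /setU1P[->|uA] /setU1P[->|vA] neq.
  + by rewrite eqxx in neq.
  + by have [] := inA v vA.
  + by rewrite r_sym; have [] := inA u uA.
  + exact: hA.
Qed.

End Ramsey.

Arguments nbhd {T}.
Arguments nbhd_sub {T r B x b}.
Arguments homogeneous_cone {T r} r_sym {B A x b}.

Lemma ramsey k s : exists R, forall (T : finType) (r : rel T),
  (forall x y, r x y = r y x) -> forall B : {set T}, R <= #|B| ->
  exists2 A : {set T}, A \subset B &
    (k <= #|A| /\ homogeneous r true A) \/ (s <= #|A| /\ homogeneous r false A).
Proof.
elim: k s => [|k IHk] s.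
  exists 0 => T r _ B _; exists set0; rewrite ?sub0set //.
  by left; split=> // x y; rewrite in_set0.
elim: s => [|s IHs].
  exists 0 => T r _ B _; exists set0; rewrite ?sub0set //.
  by right; split=> // x y; rewrite in_set0.
have [R1 HR1] := IHk s.+1; have [R2 HR2] := IHs.
exists (R1 + R2).+1 => T r r_sym B cardB.
have /set0Pn [x xB] : B != set0 by rewrite -card_gt0 (leq_trans _ cardB).
have cardN : R1 + R2 <= #|nbhd r B x true| + #|nbhd r B x false|.
  by rewrite card_nbhd; move: cardB; rewrite (cardsD1 x B) xB.
case: (leqP R1 #|nbhd r B x true|) => [big1|small1].
- have [A sA [[cardA hA]|[cardA hA]]] := HR1 T r r_sym _ big1.
  + have [sxA cardxA hxA] := homogeneous_cone r_sym xB sA hA.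
    by exists (x |: A) => //; left; rewrite cardxA.
  + by exists A; [exact: subset_trans sA nbhd_sub | right].
- have big2 : R2 <= #|nbhd r B x false| by lia.
  have [A sA [[cardA hA]|[cardA hA]]] := HR2 T r r_sym _ big2.
  + by exists A; [exact: subset_trans sA nbhd_sub | left].
  + have [sxA cardxA hxA] := homogeneous_cone r_sym xB sA hA.
    by exists (x |: A) => //; right; rewrite cardxA.
Qed.

Definition enum_prefix {T : finType} {A : {set T}} {n : nat} (hn : n <= #|A|)
    (i : 'I_n) : T :=
  enum_val (widen_ord hn i).

Lemma enum_prefix_in {T : finType} {A : {set T}} {n} (hn : n <= #|A|) i :
  enum_prefix hn i \in A.
Proof. exact: enum_valP. Qed.

Lemma enum_prefix_inj {T : finType} {A : {set T}} {n} (hn : n <= #|A|) :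
  injective (enum_prefix hn).
Proof. by move=> i j /enum_val_inj/(congr1 val) /= /val_inj. Qed.

Definition complete_graph (n : nat) : graph := @Graph n (fun v w => v != w).

Lemma complete_graph_complete n : is_complete (complete_graph n).
Proof. by split=> //; split=> [v|v w] /=; rewrite ?eqxx // eq_sym. Qed.

Lemma turan_multipartite n {l : nat} : 0 < l -> is_complete_multipartite l (turan n l).
Proof.
move=> l0; split.
  by split=> [v|v w] /=; rewrite ?eqxx // eq_sym [_ %% l == _]eq_sym.
by exists (fun v => Ordinal (ltn_pmod v l0)) => v w ne /=; rewrite ne.
Qed.

Lemma turan_sub_complete n l : subgraph (turan n l) (complete_graph n).
Proof. by exists id; split=> // v w /andP[]. Qed.

Lemma multipartite_mono {l l' : nat} {G : graph} :
  l <= l' -> is_complete_multipartite l G -> is_complete_multipartite l' G.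
Proof.
move=> ll' [gG [f hf]]; split=> //.
by exists (fun v => widen_ord ll' (f v)) => v w ne; rewrite hf.
Qed.

Lemma complete_multipartite {G : graph} : is_complete G -> is_complete_multipartite (gn G) G.
Proof. by move=> [gG hc]; split=> //; exists id => v w ne; rewrite hc. Qed.

Lemma induced_complete {H G : graph} :
  is_graph H -> is_complete G -> induced_copy H G -> is_complete H.
Proof.
move=> gH [_ hc] [f [f_inj hf]]; split=> // v w ne.
by rewrite hf hc // (inj_eq f_inj).
Qed.

Lemma induced_multipartite {l : nat} {H G : graph} : is_graph H ->
  is_complete_multipartite l G -> induced_copy H G -> is_complete_multipartite l H.
Proof.
move=> gH [_ [c hc]] [f [f_inj hf]]; split=> //.
by exists (c \o f) => v w ne; rewrite hf hc // (inj_eq f_inj).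
Qed.

Section Embeddings.

Variables (N : graph) (T : finType) (e : T -> 'I_(gn N)).
Hypotheses (N_graph : is_graph N) (e_inj : injective e).

Definition pulled_adj : rel T := fun u v => gadj N (e u) (e v).

Lemma pulled_adj_sym u v : pulled_adj u v = pulled_adj v u.
Proof. by rewrite /pulled_adj N_graph.2. Qed.

Lemma clique_copy K (A : {set T}) : is_complete K ->
  homogeneous pulled_adj true A -> gn K <= #|A| -> induced_copy K N.
Proof.
move=> [[K_irr _] K_adj] hA cardA.
exists (fun a => e (enum_prefix cardA a)); split.
  by move=> a b /e_inj /enum_prefix_inj.
move=> a b; have [->|ne] := eqVneq a b.
  by rewrite (negbTE (K_irr b)) (negbTE (N_graph.1 _)).
rewrite K_adj // [RHS]hA ?enum_prefix_in //.
by rewrite (inj_eq (enum_prefix_inj cardA)).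
Qed.

(* If T is split into l classes that are completely joined in N, then l large
   independent sets, one inside each class, yield an induced copy of any
   complete l-partite graph G: part i of G goes into the i-th independent set. *)
Lemma multipartite_copy l G (cls : T -> 'I_l) (A : 'I_l -> {set T}) :
  (forall u v, cls u != cls v -> pulled_adj u v) ->
  (forall i u, u \in A i -> cls u = i) ->
  (forall i, homogeneous pulled_adj false (A i)) ->
  (forall i, gn G <= #|A i|) ->
  is_complete_multipartite l G -> induced_copy G N.
Proof.
move=> cross clsA hA cardA [[G_irr _] [f hf]].
pose d v := enum_prefix (cardA (f v)) v.
have cls_d v : cls (d v) = f v by apply/clsA/enum_prefix_in.
have d_inj : injective d.
  move=> v w dvw; have fvw : f v = f w by rewrite -cls_d dvw cls_d.
  by move: dvw; rewrite /d fvw => /enum_prefix_inj.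
exists (e \o d); split; first exact: inj_comp.
move=> v w; have [->|ne] := eqVneq v w.
  by rewrite (negbTE (G_irr w)) (negbTE (N_graph.1 _)).
rewrite hf //=; have [fvw|nfvw] := eqVneq (f v) (f w); last first.
  by apply/esym/cross; rewrite !cls_d.
apply/esym; rewrite -/(pulled_adj _ _); apply: (hA (f v)).
- exact: enum_prefix_in.
- by rewrite fvw; apply: enum_prefix_in.
- by rewrite (inj_eq d_inj).
Qed.

End Embeddings.

Arguments pulled_adj {N T} e.
Arguments pulled_adj_sym {N T} e N_graph.
Arguments clique_copy {N T e} N_graph e_inj {K A}.
Arguments multipartite_copy {N T e} N_graph e_inj {l G cls A}.

Lemma residue_class_large l R (i : 'I_l) :
  R <= #|[set v : 'I_(l * R) | v %% l == i]|.
Proof.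
have lt_lR (j : 'I_R) : i + l * j < l * R.
  by rewrite (leq_trans (_ : _ < l * j.+1)) ?leq_mul2l ?ltn_ord ?orbT // mulnS ltn_add2r.
pose g j := Ordinal (lt_lR j).
have g_inj : injective g.
  move=> a b /(congr1 val) /= /eqP; rewrite eqn_add2l eqn_mul2l.
  by case/orP=> [/eqP l0|/eqP/val_inj //]; case: i {g lt_lR} => /=; rewrite l0.
rewrite -[R in R <= _]card_ord -cardsT -(card_imset _ g_inj); apply: subset_leq_card.
apply/subsetP => _ /imsetP [j _ ->].
by rewrite inE /= addnC mulnC modnMDl modn_small.
Qed.

Lemma least_positive (P : nat -> Prop) {j : nat} : 0 < j -> P j ->
  exists m, P m.+1 /\ forall l, 0 < l -> l <= m -> ~ P l.
Proof.
elim/ltn_ind: j => j IH j0 Pj.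
have [[l /andP[l0 lj] Pl]|none] := classic (exists2 l, 0 < l < j & P l).
  exact: IH lj l0 Pl.
exists j.-1; rewrite prednK //; split=> // l l0 lj Pl.
by apply: none; exists l; rewrite ?l0 //=; lia.
Qed.

Section ForbiddenFamily.

Variables (F : graph_family).
Hypothesis F_graphs : forall G, F G -> is_graph G.

Lemma multipartite_family_mono l l' :
  l <= l' -> fam_contains F (is_complete_multipartite l) ->
  fam_contains F (is_complete_multipartite l').
Proof. by move=> ll' [G [FG cG]]; exists G; split; last exact: multipartite_mono ll' cG. Qed.

Lemma forb_model_avoiding (P : graph -> Prop) N : is_graph N ->
  (forall H, is_graph H -> induced_copy H N -> P H) -> ~ fam_contains F P ->
  forb_model F N.
Proof.
move=> gN hP noP; split=> // H FH cH.
by apply: noP; exists H; split=> //; exact: hP (F_graphs _ FH) cH.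
Qed.

(* Without complete graphs in F, complete graphs are models containing every
   Turán graph, so chi is infinite. *)
Lemma chi_set_no_complete l : 0 < l -> ~ fam_contains F is_complete -> chi_set F l.
Proof.
move=> l0 noK; split=> // n; exists (complete_graph n); split; last split=> //.
  apply: forb_model_avoiding noK; first by case: (complete_graph_complete n).
  by move=> H gH; apply: induced_complete gH (complete_graph_complete n).
exact: turan_sub_complete.
Qed.

(* If F has no complete l-partite graph, the Turán graphs T_{n,l} themselves
   are models (their induced subgraphs are complete l-partite). *)
Lemma chi_set_turan l : 0 < l ->
  ~ fam_contains F (is_complete_multipartite l) -> chi_set F l.
Proof.
move=> l0 noP; split=> // n; exists (turan n l); split; last split=> //.
  apply: forb_model_avoiding noP; first by case: (turan_multipartite n l0).
  by move=> H gH; apply: induced_multipartite gH (turan_multipartite n l0).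
by exists id; split.
Qed.

(* Conversely, if F contains a complete graph K and a complete l-partite graph
   G, no large model contains T_{n,l}: by Ramsey, each part of a copy of
   T_{l*R,l} contains either a clique as large as K or an independent set as
   large as G, and the independent sets assemble into an induced copy of G. *)
Lemma chi_set_multipartite_free l : fam_contains F is_complete ->
  chi_set F l -> ~ fam_contains F (is_complete_multipartite l).
Proof.
move=> [K [FK cK]] [l0 models] [G [FG cG]].
have [R ramseyR] := ramsey (gn K) (gn G).
have [N [[gN noF] [_ [e [e_inj e_adj]]]]] := models (l * R).
pose cls (v : 'I_(l * R)) : 'I_l := Ordinal (ltn_pmod v l0).
have cross u v : cls u != cls v -> pulled_adj e u v.
  move=> ne; apply: e_adj; rewrite /= (_ : u %% l != v %% l) ?andbT //.
  by apply: contra_neq ne => -> .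
have parts (i : 'I_l) : exists A : {set 'I_(l * R)},
    [/\ A \subset [set v : 'I_(l * R) | v %% l == i],
    homogeneous (pulled_adj e) false A & gn G <= #|A|].
  have [A sA [[cardA hA]|[cardA hA]]] :=
    ramseyR _ _ (pulled_adj_sym e gN) _ (residue_class_large l R i).
  - by case: (noF K FK (clique_copy gN e_inj cK hA cardA)).
  - by exists A.
have [A hA] := fin_all_exists parts.
apply: (noF G FG); apply: (multipartite_copy gN e_inj cross) cG.
- move=> i u uA; apply: val_inj => /=.
  by have [/subsetP/(_ u uA)] := hA i; rewrite inE => /eqP.
- by move=> i; have [] := hA i.
- by move=> i; have [] := hA i.
Qed.

Lemma chi_set_iff l : fam_contains F is_complete ->
  chi_set F l <-> 0 < l /\ ~ fam_contains F (is_complete_multipartite l).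
Proof.
move=> hasK; split=> [hl|[l0 noP]]; last exact: chi_set_turan.
by split; [case: hl | exact: chi_set_multipartite_free].
Qed.

End ForbiddenFamily.

Arguments multipartite_family_mono {F l l'}.
Arguments chi_set_iff {F} F_graphs {l}.

Theorem mainTheorem14 (F : graph_family) (HF : forall G, F G -> is_graph G) :
  (fam_contains F is_complete ->
     exists m : nat,
       (* m = max ({l in N_+ : F contains no complete l-partite graph} ∪ {0}) *)
       ((m = 0 \/ (0 < m /\ ~ fam_contains F (is_complete_multipartite m))) /\
        (forall l, 0 < l -> ~ fam_contains F (is_complete_multipartite l) -> l <= m)) /\
       (* chi(I_F) = m + 1 *)
       is_chi F (Some m.+1) /\
       (* m + 1 = min {l in N_+ : F contains a complete l-partite graph} *)
       (fam_contains F (is_complete_multipartite m.+1) /\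
        (forall l, 0 < l -> fam_contains F (is_complete_multipartite l) -> m.+1 <= l)))
  /\
  (~ fam_contains F is_complete -> is_chi F None).
Proof.
split; last first.
  by move=> noK m; exists m.+1; split; last exact: chi_set_no_complete.
move=> hasK; have chiE := chi_set_iff HF hasK.
pose P l := fam_contains F (is_complete_multipartite l).
have [K [FK cK]] := hasK.
have PK : P (gn K).+1.
  by exists K; split; last exact: multipartite_mono (leqnSn _) (complete_multipartite cK).
have [m [Pm minm]] := least_positive P (ltn0Sn _) PK.
have notP_le l : 0 < l -> ~ P l -> l <= m.
  move=> l0 nPl; rewrite leqNgt; apply: contra_notN nPl => ltml.
  exact: multipartite_family_mono ltml Pm.
have P_gt l : 0 < l -> P l -> m < l.
  by move=> l0 Pl; rewrite ltnNge; apply/negP => lm; exact: minm l0 lm Pl.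
have zero_or_notP : m = 0 \/ (0 < m /\ ~ P m).
  by case: m minm {Pm notP_le P_gt} => [|m] minm; [left | right; split; last exact: minm].
exists m; split; first by [].
split; last by [].
split=> //; split.
- by move=> l /chiE [l0 nPl]; rewrite ltnS; exact: notP_le.
- by case: zero_or_notP => [-> | [m0 nPm]]; [left | right; apply/chiE].
Qed.
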